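(* Let $A$ be a commutative $\mathbb{N}$-graded ring generated as an $A_0$-algebra by homogeneous elements $x_1,\dots,x_n$ of positive degrees $\omega_1,\dots,\omega_n$, and let $w=\mathrm{lcm}(\omega_1,\dots,\omega_n)$. Let $k$ be a positive integer and $I=A_{\ge kw}$. If $I^p=A_{\ge pkw}$ for all integers $p$ with $1\le p\le \frac{n-2}{k}+1$, then $I^p=A_{\ge pkw}$ for all $p\ge 1$. In particular, if $k\ge n-1$, then $I^p=A_{\ge pkw}$ for all $p\ge1$.
   Context: For an $\mathbb{N}$-graded ring $A$ and a positive integer $m$, $A_{\ge m}=\bigoplus_{j\ge m}A_j$. *)

From HB Require Import structures.
From Stdlib Require List.
From mathcomp Require Import all_boot all_order all_algebra.
Set Implicit Arguments. Unset Strict Implicit. Unset Printing Implicit Defensive.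
Import GRing.Theory.
Local Open Scope ring_scope.

Definition subset_of (A : Type) := A -> Prop.

Definition is_Ngrading (A : comPzRingType) (G : nat -> subset_of A) : Prop :=
  [/\ (forall j, G j 0) /\ (forall j x y, G j x -> G j y -> G j (x - y)),
      (forall i j x y, G i x -> G j y -> G (i + j)%N (x * y)),
      G 0%N 1,
      (forall x : A, exists N (f : nat -> A),
          (forall j, G j (f j)) /\ x = \sum_(j < N) f j)
    & (forall N (f : nat -> A), (forall j, G j (f j)) ->
          \sum_(j < N) f j = 0 -> forall j, (j < N)%N -> f j = 0)].

Definition ge_part (A : comPzRingType) (G : nat -> subset_of A) (m : nat)
  : subset_of A :=
  fun x => exists N (f : nat -> A),
    [/\ (forall j, G j (f j)), (forall j, (j < m)%N -> f j = 0)
      & x = \sum_(j < N) f j].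

Definition ideal_mul (A : comPzRingType) (I J : subset_of A) : subset_of A :=
  fun x => exists s : seq (A * A),
    (forall t, Stdlib.Lists.List.In t s -> I t.1 /\ J t.2) /\
    x = \sum_(t <- s) t.1 * t.2.

Fixpoint ideal_pow (A : comPzRingType) (I : subset_of A) (p : nat) : subset_of A :=
  match p with
  | 0 => fun _ => True
  | p'.+1 => ideal_mul (ideal_pow I p') I
  end.

Definition generated_over_deg0 (A : comPzRingType) (G : nat -> subset_of A)
  (n : nat) (x : 'I_n -> A) : Prop :=
  forall y : A, exists s : seq (A * ('I_n -> nat)),
    (forall t, Stdlib.Lists.List.In t s -> G 0%N t.1) /\
    y = \sum_(t <- s) t.1 * \prod_(i < n) x i ^+ t.2 i.

Definition same_set (A : Type) (I J : subset_of A) : Prop :=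
  forall y, I y <-> J y.

From HB Require Import structures.
From mathcomp Require Import all_boot all_order all_algebra.
From mathcomp Require Import zify.
Set Implicit Arguments. Unset Strict Implicit. Unset Printing Implicit Defensive.
Import GRing.Theory.
Local Open Scope ring_scope.

(* A homogeneous element of degree d >= p k w is an A_0-combination of
   monomials in the x_i of degree d, so it suffices to put such monomials in
   I^p.  As w is a common multiple of the degrees, a monomial of degree
   > (j - 1) w + n (w - 1) has a divisor of degree exactly j w: while the
   degree exceeds n (w - 1), some x_i^(e_i) has degree >= w, and
   x_i^(w / om_i) can be split off.  When p > (n - 2)/k + 1, a monomial of
   degree >= p k w thus splits as a factor of degree k w, lying in I, times a
   cofactor of degree >= (p - 1) k w, lying in I^(p-1) by induction; the
   remaining p are covered by the hypothesis. *)

Lemma big_ind_In (R : Type) (P : R -> Prop) (idx : R) (op : R -> R -> R)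
    (T : Type) (s : seq T) (F : T -> R) :
  P idx -> (forall a b, P a -> P b -> P (op a b)) ->
  (forall t, List.In t s -> P (F t)) -> P (\big[op/idx]_(t <- s) F t).
Proof.
move=> P_idx P_op; elim: s => [|t s IHs] P_F; first by rewrite big_nil.
rewrite big_cons; apply: P_op; first by apply: P_F; left.
by apply: IHs => u u_s; apply: P_F; right.
Qed.

Lemma eq_big_In (R : Type) (idx : R) (op : R -> R -> R) (T : Type) (s : seq T)
    (F1 F2 : T -> R) :
  (forall t, List.In t s -> F1 t = F2 t) ->
  \big[op/idx]_(t <- s) F1 t = \big[op/idx]_(t <- s) F2 t.
Proof.
elim: s => [|t s IHs] eqF; first by rewrite !big_nil.
rewrite !big_cons eqF; last by left.
by rewrite IHs // => u u_s; apply: eqF; right.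
Qed.

Lemma bound_In (T : Type) (s : seq T) (f : T -> nat) :
  exists N, forall t, List.In t s -> (f t < N)%N.
Proof.
elim: s => [|t s [N ltN]]; first by exists 0%N.
exists (maxn N (f t).+1) => u [<-|u_s]; first by rewrite leq_max leqnn orbT.
by rewrite leq_max ltN.
Qed.

Lemma sum_ord_delta (R : nmodType) (N d : nat) (a : R) : (d < N)%N ->
  \sum_(j < N) (if d == j :> nat then a else 0) = a.
Proof.
move=> ltdN; rewrite (bigD1 (Ordinal ltdN)) //= eqxx big1 ?addr0 // => j ne_j.
by case: eqP => // dj; case/eqP: ne_j; apply: val_inj.
Qed.

Section Grading.

Variables (A : comPzRingType) (G : nat -> subset_of A).
Hypothesis hG : is_Ngrading G.

Lemma grade0 j : G j 0.
Proof. by have [[G0 _] _ _ _ _] := hG. Qed.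

Lemma gradeB j a b : G j a -> G j b -> G j (a - b).
Proof. by have [[_ GB] _ _ _ _] := hG; apply: GB. Qed.

Lemma gradeD j a b : G j a -> G j b -> G j (a + b).
Proof.
move=> Ga Gb; have := gradeB Ga (gradeB (grade0 j) Gb).
by rewrite sub0r opprK.
Qed.

Lemma gradeM i j a b : G i a -> G j b -> G (i + j)%N (a * b).
Proof. by have [_ GM _ _ _] := hG; apply: GM. Qed.

Lemma grade1 : G 0%N 1.
Proof. by have [_ _ G1 _ _] := hG. Qed.

Lemma graded_sum_inj N (f g : nat -> A) :
  (forall j, G j (f j)) -> (forall j, G j (g j)) ->
  \sum_(j < N) f j = \sum_(j < N) g j -> forall j, (j < N)%N -> f j = g j.
Proof.
move=> Gf Gg eq_fg j ltjN; apply/eqP; rewrite -subr_eq0; apply/eqP.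
have [_ _ _ _ direct] := hG; apply: (direct N (fun j => f j - g j)) => //.
  by move=> l; apply: gradeB.
by rewrite sumrB eq_fg subrr.
Qed.

Lemma homog_component (T : Type) (s : seq T) (F : T -> A) (dg : T -> nat) d h :
  (forall t, List.In t s -> G (dg t) (F t)) -> G d h -> h = \sum_(t <- s) F t ->
  h = \sum_(t <- s | dg t == d) F t.
Proof.
move=> GF Gh def_h; have [N0 ltN0] := bound_In s dg.
pose N := maxn N0 d.+1.
have ltdN : (d < N)%N by rewrite leq_max leqnn orbT.
pose c j := \sum_(t <- s | dg t == j) F t.
have Gc j : G j (c j).
  rewrite /c /= big_mkcond; apply: big_ind_In => [|a b|t t_s]; first exact: grade0.
    exact: gradeD.
  by case: eqP => [<-|_]; [apply: GF | apply: grade0].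
have sum_c : \sum_(j < N) c j = \sum_(j < N) (if d == j :> nat then h else 0).
  rewrite sum_ord_delta // def_h /c.
  under eq_bigr do rewrite big_mkcond; rewrite exchange_big /=.
  apply: eq_big_In => t t_s; apply: sum_ord_delta.
  by rewrite leq_max ltN0.
have Gdelta j : G j (if d == j then h else 0).
  by case: eqP => [<-|_] //; apply: grade0.
by have := graded_sum_inj Gc Gdelta sum_c ltdN; rewrite eqxx.
Qed.

Lemma ge_part_homog m d h : (m <= d)%N -> G d h -> ge_part G m h.
Proof.
move=> lemd Gh; exists d.+1, (fun j => if d == j then h else 0); split.
- by move=> j; case: eqP => [<-|_] //; apply: grade0.
- by move=> j ltjm; case: eqP => // dj; move: ltjm; rewrite -dj ltnNge lemd.
- by rewrite sum_ord_delta.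
Qed.

Lemma ge_part_has0 m : ge_part G m 0.
Proof.
exists 0%N, (fun _ => 0); split => //; last by rewrite big_ord0.
by move=> j; apply: grade0.
Qed.

Lemma ge_partD m a b : ge_part G m a -> ge_part G m b -> ge_part G m (a + b).
Proof.
move=> [N1 [f [Gf f0 ->]]] [N2 [g [Gg g0 ->]]].
pose trunc N (f : nat -> A) j := if (j < N)%N then f j else 0.
exists (N1 + N2)%N, (fun j => trunc N1 f j + trunc N2 g j); split.
- by move=> j; apply: gradeD; rewrite /trunc; case: ifP => _ //; apply: grade0.
- by move=> j ltjm; rewrite /trunc f0 // g0 // !if_same addr0.
- rewrite big_split /= /trunc -!big_mkcond /=.
  by rewrite (big_ord_widen _ f (leq_addr N2 N1)) (big_ord_widen _ g (leq_addl N1 N2)).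
Qed.

Lemma ge_part_sum m (T : Type) (r : seq T) (P : pred T) (F : T -> A) :
  (forall t, P t -> ge_part G m (F t)) -> ge_part G m (\sum_(t <- r | P t) F t).
Proof.
move=> geF; apply: (big_ind (ge_part G m)) => //; first exact: ge_part_has0.
exact: ge_partD.
Qed.

Lemma ge_part0_all a : ge_part G 0 a.
Proof. by have [_ _ _ decomp _] := hG; have [N [f [Gf ->]]] := decomp a; exists N, f. Qed.

Lemma ge_partM m1 m2 a b :
  ge_part G m1 a -> ge_part G m2 b -> ge_part G (m1 + m2) (a * b).
Proof.
move=> [N1 [f [Gf f0 ->]]] [N2 [g [Gg g0 ->]]].
rewrite mulr_suml; apply: ge_part_sum => i _.
rewrite mulr_sumr; apply: ge_part_sum => j _.
have [ltim1|lem1i] := ltnP i m1; first by rewrite f0 // mul0r; apply: ge_part_has0.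
have [ltjm2|lem2j] := ltnP j m2; first by rewrite g0 // mulr0; apply: ge_part_has0.
exact: (ge_part_homog (leq_add lem1i lem2j) (gradeM (Gf i) (Gg j))).
Qed.

Lemma ideal_pow_ge_part m p y : ideal_pow (ge_part G m) p y -> ge_part G (p * m) y.
Proof.
elim: p y => [|p IHp] y /=; first by rewrite mul0n => _; apply: ge_part0_all.
move=> [s [s_mem ->]]; apply: big_ind_In => [|a b|t t_s]; first exact: ge_part_has0.
  exact: ge_partD.
have [pow_t1 ge_t2] := s_mem t t_s.
by rewrite mulSn addnC; apply: ge_partM => //; apply: IHp.
Qed.

End Grading.

Section IdealPowers.

Variables (A : comPzRingType) (I : subset_of A).

Lemma ideal_pow_has0 p : ideal_pow I p 0.
Proof. by case: p => //= p; exists [::]; rewrite big_nil. Qed.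

Lemma ideal_powD p a b :
  ideal_pow I p.+1 a -> ideal_pow I p.+1 b -> ideal_pow I p.+1 (a + b).
Proof.
move=> [s1 [mem1 ->]] [s2 [mem2 ->]]; exists (s1 ++ s2); split; last by rewrite big_cat.
by move=> t t_s; case: (List.in_app_or _ _ _ t_s); [apply: mem1 | apply: mem2].
Qed.

Lemma ideal_pow_mull p a y : ideal_pow I p y -> ideal_pow I p (a * y).
Proof.
elim: p a y => [//|p IHp] a y [s [s_mem ->]].
exists [seq (a * t.1, t.2) | t <- s]; split.
  move=> t /(List.in_map_iff _ _ _) [u [<- u_s]]; have [pow_u1 I_u2] := s_mem u u_s.
  by split => //; apply: IHp.
by rewrite big_map mulr_sumr; apply: eq_bigr => t _; rewrite mulrA.
Qed.

Lemma ideal_pow_mulS p y z : ideal_pow I p y -> I z -> ideal_pow I p.+1 (y * z).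
Proof.
move=> pow_y I_z; exists [:: (y, z)]; split; last by rewrite big_seq1.
by move=> t [<-|[]].
Qed.

Lemma mem_ideal_pow1 y : I y -> ideal_pow I 1 y.
Proof. by move=> I_y; rewrite -[y]mul1r; apply: (@ideal_pow_mulS 0). Qed.

End IdealPowers.

Section Monomials.

Variables (n : nat) (om : 'I_n -> nat).

Definition mdeg (e : 'I_n -> nat) : nat := (\sum_(i < n) e i * om i)%N.

Lemma mdegD e1 e2 : mdeg (fun i => e1 i + e2 i)%N = (mdeg e1 + mdeg e2)%N.
Proof. by rewrite /mdeg -big_split; apply: eq_bigr => i _; rewrite mulnDl. Qed.

Lemma mdeg_large_term w e : (n * (w - 1) < mdeg e)%N -> exists i, (w <= e i * om i)%N.
Proof.
move=> large; apply/existsP; apply: contraLR large; rewrite negb_exists => /forallP small.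
rewrite -leqNgt /mdeg -[n in (n * _)%N]card_ord -sum_nat_const.
by apply: leq_sum => i _; move: (small i); rewrite -ltnNge; lia.
Qed.

Lemma submonomial_of_mdeg w : (0 < w)%N -> (forall i, om i %| w)%N ->
  forall j e, (j * w + n * (w - 1) < mdeg e + w)%N ->
  exists2 e2 : 'I_n -> nat, forall i, (e2 i <= e i)%N & mdeg e2 = (j * w)%N.
Proof.
move=> w_gt0 om_dvd_w; elim=> [|j IHj] e deg_e.
  by exists (fun _ => 0%N) => //; rewrite /mdeg big1.
have [i le_w_ei] : exists i, (w <= e i * om i)%N.
  by apply: mdeg_large_term; move: deg_e; rewrite mulSn; lia.
have om_gt0 : (0 < om i)%N by apply: dvdn_gt0 (om_dvd_w i).
pose b := (w %/ om i)%N.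
have b_om : (b * om i = w)%N by rewrite divnK.
have le_b_ei : (b <= e i)%N by rewrite -(leq_pmul2r om_gt0) b_om.
pose xi l := if l == i then b else 0%N.
have mdeg_xi : mdeg xi = w.
  by rewrite /mdeg (bigD1 i) //= /xi eqxx big1 ?addn0 // => l /negbTE ->.
have le_xi_e l : (xi l <= e l)%N by rewrite /xi; case: eqP => [->|].
pose e' l := (e l - xi l)%N.
have mdeg_e : mdeg e = (mdeg e' + w)%N.
  by rewrite -mdeg_xi -mdegD; apply: eq_bigr => l _; rewrite /e' subnK.
have [e3 le_e3 mdeg_e3] : exists2 e3 : 'I_n -> nat,
    forall l, (e3 l <= e' l)%N & mdeg e3 = (j * w)%N.
  by apply: IHj; move: deg_e; rewrite mdeg_e mulSn; lia.
exists (fun l => e3 l + xi l)%N; last by rewrite mdegD mdeg_e3 mdeg_xi mulSn addnC.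
by move=> l; move: (le_e3 l) (le_xi_e l); rewrite /e'; lia.
Qed.

Variables (A : comPzRingType) (x : 'I_n -> A).

Definition monomial (e : 'I_n -> nat) : A := \prod_(i < n) x i ^+ e i.

Lemma monomialD e1 e2 :
  monomial (fun i => e1 i + e2 i)%N = monomial e1 * monomial e2.
Proof. by rewrite /monomial -big_split; apply: eq_bigr => i _; rewrite exprD. Qed.

Lemma grade_monomial (G : nat -> subset_of A) : is_Ngrading G ->
  (forall i, G (om i) (x i)) -> forall e, G (mdeg e) (monomial e).
Proof.
move=> hG Gx e; apply: (big_ind2 (fun d y => G d y)) => [|d1 y1 d2 y2 Gy1 Gy2|i _].
- exact: (grade1 hG).
- exact: (gradeM hG Gy1 Gy2).
- elim: (e i) => [|m IHm]; first by rewrite mul0n expr0; apply: (grade1 hG).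
  by rewrite mulSn exprS; apply: (gradeM hG).
Qed.

End Monomials.

Section TruncationPowers.

Variables (A : comPzRingType) (G : nat -> subset_of A).
Variables (n : nat) (x : 'I_n -> A) (om : 'I_n -> nat) (k w : nat).
Hypothesis hG : is_Ngrading G.
Hypothesis Gx : forall i, G (om i) (x i).
Hypothesis x_gen : generated_over_deg0 G x.
Hypothesis w_gt0 : (0 < w)%N.
Hypothesis om_dvd_w : forall i, (om i %| w)%N.

Local Notation I := (ge_part G (k * w)).

Hypothesis low_powers : forall p, (1 <= p)%N -> (p.-1 * k + 2 <= n)%N ->
  forall y, ge_part G (p * k * w) y -> ideal_pow I p y.

Lemma monomial_in_ideal_pow p e : (1 <= p)%N -> (p * k * w <= mdeg om e)%N ->
  ideal_pow I p (monomial x e).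
Proof.
have ge_monomial m e' : (m <= mdeg om e')%N -> ge_part G m (monomial x e').
  by move=> le_m; exact: (ge_part_homog hG le_m (grade_monomial hG Gx e')).
elim: p e => [//|p IHp] e _ deg_e.
have [p0|p_gt0] := posnP p.
  by rewrite p0 mul1n in deg_e *; apply: mem_ideal_pow1; apply: ge_monomial.
have [low|high] := leqP (p * k + 2) n.
  by apply: low_powers => //; apply: ge_monomial.
have [e2 le_e2 mdeg_e2] : exists2 e2 : 'I_n -> nat,
    forall i, (e2 i <= e i)%N & mdeg om e2 = (k * w)%N.
  apply: submonomial_of_mdeg => //.
  have : (n.-1 * w <= p * k * w)%N by apply: leq_mul => //; lia.
  by move: deg_e; rewrite mulSn mulnDl; nia.
pose e1 i := (e i - e2 i)%N.
have e1_e2 i : (e1 i + e2 i)%N = e i by rewrite subnK.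
have mono_e : monomial x e = monomial x e1 * monomial x e2.
  by rewrite -monomialD; apply: eq_bigr => i _; rewrite e1_e2.
have mdeg_e : mdeg om e = (mdeg om e1 + k * w)%N.
  by rewrite -mdeg_e2 -mdegD; apply: eq_bigr => i _; rewrite e1_e2.
rewrite mono_e; apply: ideal_pow_mulS; last by apply: ge_monomial; rewrite mdeg_e2.
by apply: IHp => //; move: deg_e; rewrite mdeg_e mulSn mulnDl; lia.
Qed.

Lemma homog_in_ideal_pow p d h : (1 <= p)%N -> (p * k * w <= d)%N -> G d h ->
  ideal_pow I p h.
Proof.
case: p => [//|p] _ le_d Gh; have [s [s_deg0 def_h]] := x_gen h.
rewrite (homog_component (dg := fun t => mdeg om t.2) hG _ Gh def_h); last first.
  move=> t t_s; rewrite -[mdeg _ _]add0n.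
  exact: (gradeM hG (s_deg0 t t_s) (grade_monomial hG Gx t.2)).
apply: (big_ind (ideal_pow I p.+1)) => [|a b|t /eqP deg_t].
- exact: ideal_pow_has0.
- exact: ideal_powD.
- by apply: ideal_pow_mull; apply: monomial_in_ideal_pow; rewrite ?deg_t.
Qed.

Lemma ideal_pow_truncation p : (1 <= p)%N ->
  same_set (ideal_pow I p) (ge_part G (p * k * w)).
Proof.
case: p => [//|p] _ y; split => [pow_y|[N [f [Gf f0 ->]]]].
  by rewrite -mulnA; apply: (ideal_pow_ge_part hG).
apply: (big_ind (ideal_pow I p.+1)) => [|a b|j _].
- exact: ideal_pow_has0.
- exact: ideal_powD.
- have [ltj|lej] := ltnP j (p.+1 * k * w); first by rewrite f0 //; apply: ideal_pow_has0.
  exact: homog_in_ideal_pow lej (Gf j).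
Qed.

End TruncationPowers.

Theorem lemma3p5 (A : comPzRingType) (G : nat -> subset_of A)
  (n : nat) (x : 'I_n -> A) (om : 'I_n -> nat) (k : nat) :
  is_Ngrading G ->
  (forall i, (0 < om i)%N) ->
  (forall i, G (om i) (x i)) ->
  generated_over_deg0 G x ->
  (0 < k)%N ->
  let w := \big[lcmn/1%N]_(i < n) om i in
  let I := ge_part G (k * w)%N in
  ((forall p : nat, (1 <= p)%N -> (p.-1 * k + 2 <= n)%N ->
       same_set (ideal_pow I p) (ge_part G (p * k * w)%N)) ->
   forall p : nat, (1 <= p)%N -> same_set (ideal_pow I p) (ge_part G (p * k * w)%N))
  /\
  ((n.-1 <= k)%N ->
   forall p : nat, (1 <= p)%N -> same_set (ideal_pow I p) (ge_part G (p * k * w)%N)).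
Proof.
move=> hG om_gt0 Gx x_gen _ w I.
have w_gt0 : (0 < w)%N.
  by apply: (big_ind (fun m => 0 < m)%N) => // a b a_gt0 b_gt0; rewrite lcmn_gt0 a_gt0.
have om_dvd_w i : (om i %| w)%N by apply: (biglcmn_sup i).
have truncation := ideal_pow_truncation hG Gx x_gen w_gt0 om_dvd_w.
split=> [low|le_n_k] p p_ge1; apply: truncation => // q q_ge1 q_small y.
  exact: (proj2 (low q q_ge1 q_small y)).
have -> : q = 1%N by move: q_small; nia.
by rewrite mul1n; apply: mem_ideal_pow1.
Qed.
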